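(* Let $G$ be a flag with vertices $v_1,\dots,v_n$ ordered by increasing $x$-coordinate, and let $i<j<k$. If $(v_i,v_j,v_k)$ is a good upper triplet, then every edge of $G[V^-(v_jv_k)]$ is disjoint from $v_iv_j$ and related to $v_iv_j$. If $(v_i,v_j,v_k)$ is a good lower triplet, then every edge of $G[V^+(v_jv_k)]$ is disjoint from $v_iv_j$ and related to $v_iv_j$.
   Context: Let $\mathcal C=S^1\times\mathbb R$ ($S^1=[0,1]$ with $0\sim1$), points $p=(p_x,p_y)$ with $0\le p_x<1$. A flag is a graph drawn on $\mathcal C$ (vertices distinct points, edges Jordan arcs, no overlapping edges, no edge through a vertex) that is complete, simple (any two edges meet in at most one point: a common endpoint or a proper crossing), monotone (every edge meets each vertical line $l_{x=a}=\{p:p_x=a\}$ at most once, no two vertices share an $x$-coordinate, no vertex has $x$-coordinate $0$), and such that $l_{x=0}$ meets every edge in its relative interior. A point $v$ is related to an $x$-monotone curve $e$ if $l_{x=v_x}$ meets $e$ in its relative interior; then $v$ is below (above) $e$ if $v_y$ is smaller (larger) than the $y$-coordinate of $l_{x=v_x}\cap e$. Two $x$-monotone curves $e,f$ are related if they do not cross, some vertical line meets both relative interiors, and all such lines meet them in the same vertical order; then $e\prec f$ means that on every vertical line meeting both relative interiors, $e$'s point has $y$-coordinate at most that of $f$'s point. For $i<j$, $V^+(v_iv_j)=\{v_s: s>j,\ v_s \text{ above } v_iv_j\}$ and $V^-(v_iv_j)=\{v_s: s>j,\ v_s \text{ below } v_iv_j\}$. For $i<j<k$, $(v_i,v_j,v_k)$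 is a good upper triplet if $v_jv_k\prec v_iv_j$ and $|V^+(v_jv_k)|\le1$, and a good lower triplet if $v_iv_j\prec v_jv_k$ and $|V^-(v_jv_k)|\le1$. Two edges are disjoint if they share no point; $G[U]$ denotes the induced subgraph. *)

From Stdlib Require Import Reals Lra Arith.
Open Scope R_scope.

(** * The cylinder C = S^1 x R, with S^1 = [0,1] / (0 ~ 1).
    A point of C is a pair (x,y) with 0 <= x < 1.  The covering map
    R^2 -> C is [proj (x,y) = (frac x, y)]. *)
Definition pt := (R * R)%type.
Definition proj (p : pt) : pt := (frac_part (fst p), snd p).

(** A curve on C is given by a lift [e : R -> R^2] of a continuous map
    [0,1] -> C (every continuous map from [0,1] to C lifts, and every continuous
    map on [0,1] extends continuously to R, so this loses no generality).
    The curve itself is [proj o e] restricted to [0,1]; its relative interior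
    is the image of (0,1). *)
Definition curve := R -> pt.

Definition in01 (s : R) := 0 <= s <= 1.
Definition in01o (s : R) := 0 < s < 1.

Definition on_curve (p : pt) (e : curve) := exists s, in01 s /\ proj (e s) = p.
Definition on_relint (p : pt) (e : curve) := exists s, in01o s /\ proj (e s) = p.

Definition jordan_arc (e : curve) (p q : pt) :=
  continuity (fun s => fst (e s)) /\ continuity (fun s => snd (e s)) /\
  (forall s t, in01 s -> in01 t -> proj (e s) = proj (e t) -> s = t) /\
  proj (e 0) = p /\ proj (e 1) = q.

Definition x_monotone (e : curve) :=
  forall s t, in01 s -> in01 t ->
    frac_part (fst (e s)) = frac_part (fst (e t)) -> s = t.

Definition meets_line_relint (a : R) (e : curve) :=
  exists s, in01o s /\ frac_part (fst (e s)) = a.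

Definition pt_related (v : pt) (e : curve) := meets_line_relint (fst v) e.
Definition pt_below (v : pt) (e : curve) :=
  exists s, in01o s /\ frac_part (fst (e s)) = fst v /\ snd v < snd (e s).
Definition pt_above (v : pt) (e : curve) :=
  exists s, in01o s /\ frac_part (fst (e s)) = fst v /\ snd (e s) < snd v.

(** Points on the
    same vertical line near the crossing are those whose lifted x-coordinates moved
    by the same amount from the crossing. *)
Definition switch_side (e f : curve) (s0 t0 d : R) :=
  forall s t, in01o s -> in01o t ->
    Rabs (fst (e s) - fst (e s0)) < d ->
    fst (e s) - fst (e s0) = fst (f t) - fst (f t0) ->
    (fst (e s) < fst (e s0) -> snd (e s) < snd (f t)) /\
    (fst (e s0) < fst (e s) -> snd (f t) < snd (e s)).

Definition crosses_at (e f : curve) (s0 t0 : R) :=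
  in01o s0 /\ in01o t0 /\ proj (e s0) = proj (f t0) /\
  exists d, 0 < d /\ (switch_side e f s0 t0 d \/ switch_side f e t0 s0 d).

Definition cross (e f : curve) := exists s0 t0, crosses_at e f s0 t0.

Definition common_line (e f : curve) :=
  exists s t, in01o s /\ in01o t /\
    frac_part (fst (e s)) = frac_part (fst (f t)).

Definition below_all (e f : curve) :=
  forall s t, in01o s -> in01o t ->
    frac_part (fst (e s)) = frac_part (fst (f t)) -> snd (e s) <= snd (f t).

Definition related_curves (e f : curve) :=
  ~ cross e f /\ common_line e f /\ (below_all e f \/ below_all f e).

Definition prec (e f : curve) := related_curves e f /\ below_all e f.

Definition disjoint_curves (e f : curve) :=
  forall p, on_curve p e -> on_curve p f -> False.

(** * Flags.  Vertices v 1, ..., v n (ordered by increasing x-coordinate);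
    for 1 <= i < j <= n, [E i j] is the edge v_i v_j (complete graph). *)
Definition is_edge (n i j : nat) := (1 <= i)%nat /\ (i < j)%nat /\ (j <= n)%nat.

Definition is_flag (n : nat) (v : nat -> pt) (E : nat -> nat -> curve) :=
  (forall i, (1 <= i <= n)%nat -> 0 < fst (v i) < 1) /\
  (forall i j, is_edge n i j -> fst (v i) < fst (v j)) /\
  (forall i j, is_edge n i j -> jordan_arc (E i j) (v i) (v j)) /\
  (forall i j, is_edge n i j -> x_monotone (E i j)) /\
  (forall i j k, is_edge n i j -> (1 <= k <= n)%nat -> ~ on_relint (v k) (E i j)) /\
  (forall i j k l, is_edge n i j -> is_edge n k l -> (i, j) <> (k, l) ->
     forall p q, on_curve p (E i j) -> on_curve p (E k l) ->
                 on_curve q (E i j) -> on_curve q (E k l) -> p = q) /\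
  (forall i j k l, is_edge n i j -> is_edge n k l -> (i, j) <> (k, l) ->
     forall p, on_curve p (E i j) -> on_curve p (E k l) ->
       ((p = v i \/ p = v j) /\ (p = v k \/ p = v l)) \/
       (exists s t, crosses_at (E i j) (E k l) s t /\ proj (E i j s) = p)) /\
  (forall i j, is_edge n i j -> meets_line_relint 0 (E i j)).

Definition Vplus (n : nat) (v : nat -> pt) (E : nat -> nat -> curve) (j k s : nat) :=
  (k < s <= n)%nat /\ pt_above (v s) (E j k).
Definition Vminus (n : nat) (v : nat -> pt) (E : nat -> nat -> curve) (j k s : nat) :=
  (k < s <= n)%nat /\ pt_below (v s) (E j k).

Definition card_le1 (P : nat -> Prop) := forall s t, P s -> P t -> s = t.

Definition good_upper n v E (i j k : nat) :=
  prec (E j k) (E i j) /\ card_le1 (Vplus n v E j k).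
Definition good_lower n v E (i j k : nat) :=
  prec (E i j) (E j k) /\ card_le1 (Vminus n v E j k).

From Stdlib Require Import Reals Arith Lra Lia ZArith Ranalysis5 ClassicalEpsilon
  FunctionalExtensionality.
Open Scope R_scope.

(* Cut the cylinder along [x = 0].  An edge [v_a v_b], [a < b], is x-monotone and crosses
   [x = 0], so in the universal cover it is the graph of a continuous function over
   [(x_b, 1 + x_a)].  Take a good upper triplet and [s < t] in [V^-(v_j v_k)]; the edges
   [v_s v_t] and [v_i v_j] share the vertical lines over [(x_t, 1 + x_i)] and, one turn apart,
   over [(x_j, x_s)].  Over [(x_t, 1 + x_j)] the edge [v_s v_t] stays below [v_j v_k]: if it got
   above, it would meet [v_j v_k] once after leaving [v_t], hence (two edges meet at most once)
   pass below [v_k]; then it stays below [v_k v_s] (they share [v_s]), which stays below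
   [v_j v_k] (they share [v_k]).  Since [v_j v_k] lies below [v_i v_j], this settles the first
   range and shows that [v_s v_t] passes below [v_j]; on the second range [v_s v_t] thus starts
   and ends below [v_i v_j], and getting above it in between would take two meetings.
   Reflecting [y |-> -y] turns good lower triplets into good upper ones. *)

Lemma frac_part_of_bounds (x : R) (z : Z) :
  IZR z <= x < IZR z + 1 -> frac_part x = x - IZR z.
Proof.
  intros Hx. symmetry.
  exact (proj2 (Int_part_frac_part_spec x z (x - IZR z) ltac:(lra) ltac:(ring))).
Qed.

Lemma frac_part_small (x : R) : 0 <= x < 1 -> frac_part x = x.
Proof. intros Hx. rewrite (frac_part_of_bounds x 0); simpl; lra. Qed.

Lemma frac_part_small1 (x : R) : 1 <= x < 2 -> frac_part x = x - 1.
Proof. intros Hx. rewrite (frac_part_of_bounds x 1); simpl; lra. Qed.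

Lemma frac_part_plus_IZR (x : R) (z : Z) : frac_part (x + IZR z) = frac_part x.
Proof.
  pose proof (base_Int_part x).
  rewrite (frac_part_of_bounds (x + IZR z) (Int_part x + z)); rewrite plus_IZR.
  - unfold frac_part. ring.
  - lra.
Qed.

Lemma frac_part_minus_IZR (x : R) (z : Z) : frac_part (x - IZR z) = frac_part x.
Proof.
  rewrite <- (frac_part_plus_IZR (x - IZR z) z). f_equal. ring.
Qed.

Lemma frac_part_eq_IZR (x y : R) : frac_part x = frac_part y -> exists z : Z, x = y + IZR z.
Proof.
  unfold frac_part. intros H. exists (Int_part x - Int_part y)%Z. rewrite minus_IZR. lra.
Qed.

Lemma ivt_between (f : R -> R) (a b y : R) : a <= b ->
  (forall x, a <= x <= b -> continuity_pt f x) ->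
  f a <= y <= f b \/ f b <= y <= f a -> exists x, a <= x <= b /\ f x = y.
Proof.
  intros Hab Hc Hy. destruct (Req_dec a b) as [<-|Hne].
  { exists a. split; lra. }
  destruct Hy as [Hy|Hy].
  - destruct (f_interv_is_interv f a b y ltac:(lra) Hy Hc) as [x Hx]. exists x; tauto.
  - destruct (f_interv_is_interv (fun x => - f x) a b (- y) ltac:(lra) ltac:(lra))
      as [x [Hx Hfx]].
    + intros x Hx. apply continuity_pt_opp. auto.
    + exists x. split; [exact Hx | lra].
Qed.

Lemma in01o_in01 u : in01o u -> in01 u.
Proof. unfold in01, in01o. lra. Qed.

Section ContinuousInjective.
Variable X : R -> R.
Hypothesis X_cont : continuity X.
Hypothesis X_inj : forall u w, in01 u -> in01 w -> X u = X w -> u = w.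

Lemma cinj_between u w z : in01 u -> in01 z -> u < w < z ->
  X u < X w < X z \/ X z < X w < X u.
Proof.
  unfold in01. intros Hu Hz Hw.
  assert (Hne : forall a b, u <= a <= z -> u <= b <= z -> a <> b -> X a <> X b).
  { intros a b Ha Hb Hab E. apply Hab, X_inj; unfold in01; lra. }
  pose proof (Hne u w ltac:(lra) ltac:(lra) ltac:(lra)).
  pose proof (Hne w z ltac:(lra) ltac:(lra) ltac:(lra)).
  pose proof (Hne u z ltac:(lra) ltac:(lra) ltac:(lra)).
  (* otherwise a value strictly between X u and X z is taken twice *)
  assert (Hivt : forall a b y, u <= a <= b -> b <= z -> a <> b ->
            X a < y < X b \/ X b < y < X a -> exists c, a < c < b /\ X c = y).
  { intros a b y Ha Hb Hab Hy.
    destruct (ivt_between X a b y ltac:(lra) (fun c _ => X_cont c) ltac:(lra)) as [c [Hc E]].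
    exists c. split; [|exact E].
    destruct (Req_dec c a) as [->|]; [lra|]. destruct (Req_dec c b) as [->|]; lra. }
  destruct (Rlt_or_le (X u) (X w)), (Rlt_or_le (X w) (X z)); try (left; lra); try (right; lra);
    exfalso; destruct (Rlt_or_le (X u) (X z)).
  - destruct (Hivt u w (X z)) as [c [Hc E]]; try lra.
    apply (Hne c z); lra.
  - destruct (Hivt w z (X u)) as [c [Hc E]]; try lra.
    apply (Hne c u); lra.
  - destruct (Hivt w z (X u)) as [c [Hc E]]; try lra.
    apply (Hne c u); lra.
  - destruct (Hivt u w (X z)) as [c [Hc E]]; try lra.
    apply (Hne c z); lra.
Qed.

Lemma cinj_decreasing : X 1 < X 0 ->
  forall u w, in01 u -> in01 w -> u < w -> X w < X u.
Proof.
  unfold in01. intros H01 u w Hu Hw Huw.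
  assert (I0 : in01 0) by (unfold in01; lra). assert (I1 : in01 1) by (unfold in01; lra).
  destruct (Req_dec u 0) as [->|Hu0]; destruct (Req_dec w 1) as [->|Hw1]; [lra| | |].
  - destruct (cinj_between 0 w 1); auto; lra.
  - destruct (cinj_between 0 u 1); auto; lra.
  - destruct (cinj_between 0 u 1), (cinj_between 0 u w); unfold in01 in *; auto; lra.
Qed.
End ContinuousInjective.

Lemma monotone_lift_width (e : curve) : continuity (fun s => fst (e s)) -> x_monotone e ->
  forall a b, in01 a -> in01 b -> fst (e b) - fst (e a) < 1.
Proof.
  intros Hc Hm a b Ha Hb. apply Rnot_le_lt. intros Hwide.
  (* the x-lift would pass through [fst (e a) + 1], a second point over the line of [e a] *)
  assert (Hy : exists w, in01 w /\ fst (e w) = fst (e a) + 1).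
  { destruct (Rle_lt_dec a b).
    - destruct (ivt_between (fun s => fst (e s)) a b (fst (e a) + 1)) as [w [Hwr E]];
        [lra | intros; apply Hc | lra |].
      exists w. unfold in01 in *. split; [lra | exact E].
    - destruct (ivt_between (fun s => fst (e s)) b a (fst (e a) + 1)) as [w [Hwr E]];
        [lra | intros; apply Hc | lra |].
      exists w. unfold in01 in *. split; [lra | exact E]. }
  destruct Hy as [w [Hw E]].
  assert (w = a) as ->.
  { apply Hm; auto. rewrite E. exact (frac_part_plus_IZR _ 1). }
  lra.
Qed.

Section MonotoneArcThroughZero.
Variables (e : curve) (xa xb ya yb : R).
Hypotheses (Ha : 0 < xa) (Hab : xa < xb) (Hb : xb < 1).
Hypothesis Hc : continuity (fun s => fst (e s)).
Hypothesis Hm : x_monotone e.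
Hypothesis P0 : proj (e 0) = (xa, ya).
Hypothesis P1 : proj (e 1) = (xb, yb).
Hypothesis H0 : meets_line_relint 0 e.

Lemma monotone_arc_lift_inj u w : in01 u -> in01 w -> fst (e u) = fst (e w) -> u = w.
Proof. intros Hu Hw E. apply Hm; auto. rewrite E. reflexivity. Qed.

(* Going from [v a] to [v b] with [xa < xb] through the line [x = 0] means going left. *)
Lemma monotone_arc_lift_decr_ends : fst (e 1) < fst (e 0).
Proof.
  destruct H0 as [u0 [Hu0 F0]].
  assert (I0 : in01 0) by (unfold in01; lra). assert (I1 : in01 1) by (unfold in01; lra).
  assert (Iu0 : in01 u0) by now apply in01o_in01.
  destruct (Rlt_or_le (fst (e 1)) (fst (e 0))) as [|Hle]; [assumption|]. exfalso.
  assert (D : (fun s => - fst (e s)) 1 < (fun s => - fst (e s)) 0).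
  { assert (fst (e 0) <> fst (e 1)) by (intro E; apply monotone_arc_lift_inj in E; auto; lra).
    simpl. lra. }
  pose proof (cinj_decreasing (fun s => - fst (e s)) (continuity_opp _ Hc)
    ltac:(intros u w Hu Hw E; apply monotone_arc_lift_inj; auto; lra) D) as Inc.
  pose proof (Inc 0 u0 I0 Iu0 ltac:(unfold in01o in *; lra)).
  pose proof (Inc u0 1 Iu0 I1 ltac:(unfold in01o in *; lra)).
  pose proof (monotone_lift_width e Hc Hm 0 1 I0 I1).
  injection P0 as F0a _. injection P1 as F1a _.
  pose proof (Rplus_Int_part_frac_part (fst (e 0))) as M0.
  pose proof (Rplus_Int_part_frac_part (fst (e 1))) as M1.
  pose proof (Rplus_Int_part_frac_part (fst (e u0))) as N0.
  rewrite F0a in M0. rewrite F1a in M1. rewrite F0 in N0. cbv beta in *.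
  set (m0 := Int_part (fst (e 0))) in *. set (m1 := Int_part (fst (e 1))) in *.
  set (k0 := Int_part (fst (e u0))) in *.
  assert ((m0 - k0 < 0)%Z) by (apply lt_IZR; rewrite minus_IZR; lra).
  assert ((k0 - m1 < 1)%Z) by (apply lt_IZR; rewrite minus_IZR; lra).
  assert (L : (1 <= m1 - m0)%Z) by lia.
  apply IZR_le in L. rewrite minus_IZR in L. lra.
Qed.

Lemma monotone_arc_lift :
  exists z : Z, fst (e 0) - IZR z = 1 + xa /\ fst (e 1) - IZR z = xb /\
    forall u w, in01 u -> in01 w -> u < w -> fst (e w) < fst (e u).
Proof.
  pose proof (cinj_decreasing _ Hc monotone_arc_lift_inj monotone_arc_lift_decr_ends) as Dec.
  destruct H0 as [u0 [Hu0 F0]].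
  assert (I0 : in01 0) by (unfold in01; lra). assert (I1 : in01 1) by (unfold in01; lra).
  assert (Iu0 : in01 u0) by now apply in01o_in01.
  pose proof (Dec 0 u0 I0 Iu0 ltac:(unfold in01o in *; lra)).
  pose proof (Dec u0 1 Iu0 I1 ltac:(unfold in01o in *; lra)).
  pose proof (monotone_lift_width e Hc Hm 1 0 I1 I0).
  injection P0 as F0a _. injection P1 as F1a _.
  pose proof (Rplus_Int_part_frac_part (fst (e 0))) as M0.
  pose proof (Rplus_Int_part_frac_part (fst (e 1))) as M1.
  pose proof (Rplus_Int_part_frac_part (fst (e u0))) as N0.
  rewrite F0a in M0. rewrite F1a in M1. rewrite F0 in N0.
  set (m0 := Int_part (fst (e 0))) in *. set (m1 := Int_part (fst (e 1))) in *.
  set (k0 := Int_part (fst (e u0))) in *.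
  assert ((k0 - m0 < 1)%Z) by (apply lt_IZR; rewrite minus_IZR; lra).
  assert ((m1 - k0 < 0)%Z) by (apply lt_IZR; rewrite minus_IZR; lra).
  assert ((m0 - m1 < 2)%Z) by (apply lt_IZR; rewrite minus_IZR; lra).
  assert (m1 = m0 - 1)%Z as Em1 by lia.
  exists (m0 - 1)%Z. rewrite Em1 in M1. rewrite minus_IZR in *. simpl.
  split; [lra|]. split; [lra|]. exact Dec.
Qed.
End MonotoneArcThroughZero.

(** * Edges as graphs in the universal cover *)

(* In the lift shifted left by [c], the x-coordinate of [e] decreases from [hi] to [lo]
   along the parametrisation, so [e] is the graph of a function over [[lo, hi]]. *)
Record lifted_graph (e : curve) (c lo hi : R) : Prop := {
  lg_xcont : continuity (fun s => fst (e s));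
  lg_ycont : continuity (fun s => snd (e s));
  lg_decr : forall u w, in01 u -> in01 w -> u < w -> fst (e w) < fst (e u);
  lg_start : fst (e 0) - c = hi;
  lg_end : fst (e 1) - c = lo }.

(* Meaningful only for [lo <= X <= hi] on a [lifted_graph e c lo hi]; arbitrary otherwise. *)
Definition param_at (e : curve) (c X : R) : R :=
  epsilon (inhabits 0) (fun u => in01 u /\ fst (e u) - c = X).

Definition height (e : curve) (c X : R) : R := snd (e (param_at e c X)).

Section LiftedGraph.
Variables (e : curve) (c lo hi : R).
Hypothesis He : lifted_graph e c lo hi.

Lemma lift_range u : in01 u -> lo <= fst (e u) - c <= hi.
Proof.
  intros Hu. pose proof (lg_start _ _ _ _ He). pose proof (lg_end _ _ _ _ He).
  pose proof (lg_decr _ _ _ _ He 0 u). pose proof (lg_decr _ _ _ _ He u 1).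
  unfold in01 in *.
  destruct (Req_dec u 0) as [->|]; [lra|]. destruct (Req_dec u 1) as [->|]; [lra|].
  lra.
Qed.

Lemma lift_range_open u : in01o u -> lo < fst (e u) - c < hi.
Proof.
  intros Hu. pose proof (lg_start _ _ _ _ He). pose proof (lg_end _ _ _ _ He).
  pose proof (lg_decr _ _ _ _ He 0 u). pose proof (lg_decr _ _ _ _ He u 1).
  unfold in01, in01o in *. lra.
Qed.

Lemma lift_inj u w : in01 u -> in01 w -> fst (e u) = fst (e w) -> u = w.
Proof.
  intros Hu Hw E. pose proof (lg_decr _ _ _ _ He u w Hu Hw).
  pose proof (lg_decr _ _ _ _ He w u Hw Hu).
  destruct (Rtotal_order u w) as [|[|]]; lra.
Qed.

Lemma param_at_spec X : lo <= X <= hi -> in01 (param_at e c X) /\ fst (e (param_at e c X)) - c = X.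
Proof.
  intros HX. unfold param_at. apply epsilon_spec.
  pose proof (lg_start _ _ _ _ He). pose proof (lg_end _ _ _ _ He).
  destruct (ivt_between (fun s => fst (e s) - c) 0 1 X) as [u [Hu E]].
  - lra.
  - intros. apply continuity_pt_minus; [apply (lg_xcont _ _ _ _ He) | now apply continuity_pt_const].
  - lra.
  - exists u. split; [exact Hu | exact E].
Qed.

Lemma param_at_lift u : in01 u -> param_at e c (fst (e u) - c) = u.
Proof.
  intros Hu. destruct (param_at_spec (fst (e u) - c)) as [H1 H2]; [apply lift_range; auto|].
  apply lift_inj; auto. lra.
Qed.

Lemma height_lift u : in01 u -> height e c (fst (e u) - c) = snd (e u).
Proof. intros Hu. unfold height. rewrite param_at_lift; auto. Qed.

Lemma param_at_open X : lo < X < hi -> in01o (param_at e c X).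
Proof.
  intros HX. destruct (param_at_spec X) as [H1 H2]; [lra|].
  pose proof (lg_start _ _ _ _ He). pose proof (lg_end _ _ _ _ He).
  unfold in01 in H1. unfold in01o.
  destruct (Req_dec (param_at e c X) 0) as [E|]; [rewrite E in H2; lra|].
  destruct (Req_dec (param_at e c X) 1) as [E|]; [rewrite E in H2; lra|].
  lra.
Qed.

Lemma param_at_cont X : lo < X < hi -> continuity_pt (param_at e c) X.
Proof.
  intros HX.
  pose proof (lg_start _ _ _ _ He). pose proof (lg_end _ _ _ _ He).
  (* [param_at e c] inverts the increasing map [u |-> c - fst (e u)] after [X |-> - X] *)
  set (g := fun y => param_at e c (- y)).
  assert (Cg : continuity_pt g (- X)).
  { apply (continuity_pt_recip_interv (fun u => - (fst (e u) - c)) g 0 1 ltac:(lra)).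
    - intros x y Hx Hxy Hy.
      pose proof (lg_decr _ _ _ _ He x y ltac:(unfold in01; lra) ltac:(unfold in01; lra) Hxy).
      lra.
    - intros x Hx1 Hx2. unfold comp, g, id.
      destruct (param_at_spec (- x)) as [_ E]; lra.
    - intros x Hx1 Hx2. unfold g.
      destruct (param_at_spec (- x)) as [E _]; [lra|]. exact E.
    - intros a Ha. apply continuity_pt_opp, continuity_pt_minus;
        [apply (lg_xcont _ _ _ _ He) | now apply continuity_pt_const].
    - lra. }
  apply (continuity_pt_locally_ext (comp g (fun x => - x)) (param_at e c) 1 X ltac:(lra)).
  - intros y _. unfold comp, g. rewrite Ropp_involutive. reflexivity.
  - apply continuity_pt_comp; [|exact Cg].
    apply continuity_pt_opp, derivable_continuous_pt, derivable_pt_id.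
Qed.

Lemma param_at_interior X : lo < X < hi ->
  in01o (param_at e c X) /\ fst (e (param_at e c X)) - c = X.
Proof.
  intros HX. split; [now apply param_at_open | apply param_at_spec; lra].
Qed.

Lemma height_cont X : lo < X < hi -> continuity_pt (height e c) X.
Proof.
  intros HX. apply (continuity_pt_comp (param_at e c) (fun s => snd (e s))).
  - now apply param_at_cont.
  - apply (lg_ycont _ _ _ _ He).
Qed.
End LiftedGraph.

Lemma proj_shift (e : curve) (z : Z) u :
  proj (e u) = (frac_part (fst (e u) - IZR z), snd (e u)).
Proof. unfold proj. rewrite frac_part_minus_IZR. reflexivity. Qed.

Lemma height_at_line (e : curve) (z : Z) (lo hi X w : R) : lifted_graph e (IZR z) lo hi ->
  hi - lo <= 1 -> lo < X < hi -> in01o w -> frac_part (fst (e w)) = frac_part X ->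
  height e (IZR z) X = snd (e w).
Proof.
  intros He Hw HX Hw0 F.
  pose proof (lift_range_open _ _ _ _ He w Hw0).
  rewrite <- (frac_part_minus_IZR (fst (e w)) z) in F.
  destruct (frac_part_eq_IZR _ _ F) as [m Hm].
  assert (Mb : (-1 < m < 1)%Z) by (split; apply lt_IZR; lra).
  assert (m = 0%Z) as -> by lia. rewrite Rplus_0_r in Hm.
  rewrite <- Hm. apply (height_lift _ _ _ _ He). now apply in01o_in01.
Qed.

Lemma param_at_same_line (e : curve) (ze : Z) (loe hie : R) (f : curve) (zf : Z)
  (lof hif X : R) : lifted_graph e (IZR ze) loe hie -> lifted_graph f (IZR zf) lof hif ->
  loe < X < hie -> lof < X < hif ->
  frac_part (fst (e (param_at e (IZR ze) X))) = frac_part (fst (f (param_at f (IZR zf) X))).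
Proof.
  intros He Hf H1 H2.
  rewrite <- (frac_part_minus_IZR (fst (e _)) ze), <- (frac_part_minus_IZR (fst (f _)) zf).
  now rewrite (proj2 (param_at_interior _ _ _ _ He X H1)),
    (proj2 (param_at_interior _ _ _ _ Hf X H2)).
Qed.

Lemma below_all_height (e : curve) (ze : Z) (loe hie : R) (f : curve) (zf : Z) (lof hif X : R) :
  lifted_graph e (IZR ze) loe hie -> lifted_graph f (IZR zf) lof hif -> below_all e f ->
  loe < X < hie -> lof < X < hif -> height e (IZR ze) X <= height f (IZR zf) X.
Proof.
  intros He Hf B H1 H2. apply B.
  - now apply (param_at_open _ _ _ _ He).
  - now apply (param_at_open _ _ _ _ Hf).
  - now apply (param_at_same_line _ _ loe hie _ _ lof hif).
Qed.

Lemma exists_pos_below (a b : R) : 0 < a -> 0 < b -> exists d, 0 < d /\ d < a /\ d < b.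
Proof.
  intros Ha Hb. exists (Rmin a b / 2).
  pose proof (Rmin_l a b). pose proof (Rmin_r a b). pose proof (Rmin_pos a b Ha Hb). lra.
Qed.

Lemma continuity_pt_near (f : R -> R) (x0 : R) : continuity_pt f x0 ->
  forall eps, 0 < eps -> exists del, 0 < del /\
    forall x, Rabs (x - x0) < del -> Rabs (f x - f x0) < eps.
Proof.
  intros Hc eps Heps. destruct (Hc eps Heps) as [del [Hdel Hf]].
  exists del. split; [exact Hdel|]. intros x Hx.
  destruct (Req_dec x x0) as [->|Hne].
  - rewrite Rminus_diag, Rabs_R0. exact Heps.
  - apply (Hf x). split; [split; [exact I | auto] | exact Hx].
Qed.

Section TwoGraphs.
Variables (e : curve) (ce loe hie : R) (f : curve) (cf lof hif : R).
Hypothesis He : lifted_graph e ce loe hie.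
Hypothesis Hf : lifted_graph f cf lof hif.

(* With [a = 1] or [a = -1], [a * (...) < 0] covers both strict vertical orders at once. *)
Lemma gap_sign_nearby (D a u0 : R) : in01 u0 -> lof < fst (e u0) - ce - D < hif ->
  a * (snd (e u0) - height f cf (fst (e u0) - ce - D)) < 0 ->
  forall eta, 0 < eta -> exists u, in01o u /\ Rabs (fst (e u) - fst (e u0)) < eta /\
    a * (snd (e u) - height f cf (fst (e u) - ce - D)) < 0.
Proof.
  intros Hu0 Hr Hs eta Heta.
  set (phi := fun u => a * (snd (e u) - height f cf (fst (e u) - ce - D))).
  assert (Cphi : continuity_pt phi u0).
  { apply continuity_pt_scal, continuity_pt_minus; [apply (lg_ycont _ _ _ _ He)|].
    apply (continuity_pt_comp (fun u => fst (e u) - ce - D) (height f cf)).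
    - apply continuity_pt_minus; [|now apply continuity_pt_const].
      apply continuity_pt_minus; [apply (lg_xcont _ _ _ _ He)|now apply continuity_pt_const].
    - apply (height_cont f cf lof hif Hf). exact Hr. }
  destruct (continuity_pt_near phi u0 Cphi (- phi u0) ltac:(unfold phi; lra)) as [d1 [Hd1 P1]].
  destruct (continuity_pt_near (fun u => fst (e u)) u0 (lg_xcont _ _ _ _ He u0) eta Heta)
    as [d2 [Hd2 P2]].
  destruct (exists_pos_below d1 d2 Hd1 Hd2) as [d3 [Hd3 [Hd31 Hd32]]].
  destruct (exists_pos_below d3 (1/2) Hd3 ltac:(lra)) as [d [Hd [Hdd3 Hd12]]].
  assert (Hu : exists u, in01o u /\ Rabs (u - u0) < d3).
  { unfold in01 in Hu0. destruct (Rlt_le_dec u0 (1/2)).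
    - exists (u0 + d). unfold in01o. rewrite Rabs_right; lra.
    - exists (u0 - d). unfold in01o. rewrite Rabs_left; lra. }
  destruct Hu as [u [Hu Hud]].
  exists u. split; [exact Hu|]. split; [apply P2; lra|].
  specialize (P1 u ltac:(lra)). apply Rabs_def2 in P1. unfold phi in *. lra.
Qed.

Lemma height_gap_near_start (D a : R) : lof < hie - D < hif ->
  a * (snd (e 0) - height f cf (hie - D)) < 0 ->
  forall eta, 0 < eta -> exists X, hie - D - eta < X < hie - D /\ lof < X /\ loe < X + D /\
    a * (height e ce (X + D) - height f cf X) < 0.
Proof.
  intros Hr Hs eta Heta. pose proof (lg_start _ _ _ _ He) as E0.
  destruct (exists_pos_below eta (hie - D - lof) Heta ltac:(lra)) as [eta' [H1 [H2 H3]]].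
  destruct (gap_sign_nearby D a 0 ltac:(unfold in01; lra) ltac:(lra)
              ltac:(replace (fst (e 0) - ce - D) with (hie - D) by lra; exact Hs) eta' H1)
    as [u [Hu [Hx Hg]]].
  pose proof (lift_range_open e ce loe hie He u Hu).
  pose proof (lg_decr _ _ _ _ He 0 u ltac:(unfold in01; lra)
                ltac:(unfold in01, in01o in *; lra) ltac:(unfold in01o in *; lra)).
  apply Rabs_def2 in Hx.
  exists (fst (e u) - ce - D). split; [lra|]. split; [lra|]. split; [lra|].
  replace (fst (e u) - ce - D + D) with (fst (e u) - ce) by ring.
  rewrite (height_lift e ce loe hie He u) by (unfold in01, in01o in *; lra). exact Hg.
Qed.

Lemma height_gap_near_end (D a : R) : lof < loe - D < hif ->
  a * (snd (e 1) - height f cf (loe - D)) < 0 ->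
  forall eta, 0 < eta -> exists X, loe - D < X < loe - D + eta /\ X < hif /\ X + D < hie /\
    a * (height e ce (X + D) - height f cf X) < 0.
Proof.
  intros Hr Hs eta Heta. pose proof (lg_end _ _ _ _ He) as E1.
  destruct (exists_pos_below eta (hif - (loe - D)) Heta ltac:(lra)) as [eta' [H1 [H2 H3]]].
  destruct (gap_sign_nearby D a 1 ltac:(unfold in01; lra) ltac:(lra)
              ltac:(replace (fst (e 1) - ce - D) with (loe - D) by lra; exact Hs) eta' H1)
    as [u [Hu [Hx Hg]]].
  pose proof (lift_range_open e ce loe hie He u Hu).
  pose proof (lg_decr _ _ _ _ He u 1 ltac:(unfold in01, in01o in *; lra)
                ltac:(unfold in01; lra) ltac:(unfold in01o in *; lra)).
  apply Rabs_def2 in Hx.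
  exists (fst (e u) - ce - D). split; [lra|]. split; [lra|]. split; [lra|].
  replace (fst (e u) - ce - D + D) with (fst (e u) - ce) by ring.
  rewrite (height_lift e ce loe hie He u) by (unfold in01, in01o in *; lra). exact Hg.
Qed.

Lemma height_gap_root (D a X1 X2 : R) : X1 < X2 ->
  (forall X, X1 <= X <= X2 -> lof < X < hif /\ loe < X + D < hie) ->
  a * (height e ce (X1 + D) - height f cf X1) < 0 ->
  0 < a * (height e ce (X2 + D) - height f cf X2) ->
  exists M, X1 < M < X2 /\ height e ce (M + D) = height f cf M.
Proof.
  intros H12 Hr H1 H2.
  set (psi := fun X => a * (height e ce (X + D) - height f cf X)).
  destruct (ivt_between psi X1 X2 0) as [M [HM E]].
  - lra.
  - intros X HX. destruct (Hr X HX) as [R1 R2].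
    apply continuity_pt_scal, continuity_pt_minus.
    + apply (continuity_pt_comp (fun X => X + D) (height e ce)).
      * apply continuity_pt_plus; [apply derivable_continuous_pt, derivable_pt_id|].
        now apply continuity_pt_const.
      * now apply (height_cont e ce loe hie He).
    + now apply (height_cont f cf lof hif Hf).
  - unfold psi. lra.
  - exists M. unfold psi in E.
    destruct (Req_dec M X1) as [->|]; [lra|]. destruct (Req_dec M X2) as [->|]; [lra|].
    split; [lra|]. destruct (Rmult_integral _ _ E) as [Ha|Ha]; [rewrite Ha in H1|]; lra.
Qed.

Lemma height_gap_keeps_sign (D a l r X0 : R) :
  (forall X, l < X < r -> lof < X < hif /\ loe < X + D < hie) ->
  (forall X, l < X < r -> height e ce (X + D) <> height f cf X) ->
  l < X0 < r -> a * (height e ce (X0 + D) - height f cf X0) < 0 ->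
  forall X, l < X < r -> a * (height e ce (X + D) - height f cf X) < 0.
Proof.
  intros Hdom Hne HX0 Hs X HX.
  destruct (Rlt_or_le (a * (height e ce (X + D) - height f cf X)) 0) as [|Hge]; [assumption|].
  exfalso.
  destruct (Rle_lt_or_eq_dec _ _ Hge) as [Hpos|Hz].
  - destruct (Rtotal_order X0 X) as [Hlt|[->|Hlt]]; [| lra |].
    + destruct (height_gap_root D a X0 X Hlt ltac:(intros; apply Hdom; lra) Hs Hpos)
        as [M [HM EM]].
      apply (Hne M); [lra | exact EM].
    + destruct (height_gap_root D (- a) X X0 Hlt ltac:(intros; apply Hdom; lra)
                  ltac:(lra) ltac:(lra)) as [M [HM EM]].
      apply (Hne M); [lra | exact EM].
  - destruct (Rmult_integral _ _ (eq_sym Hz)) as [Ha|Hd].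
    + rewrite Ha in Hs. lra.
    + apply (Hne X HX). lra.
Qed.

Lemma crossing_sides (D s0 t0 d : R) : in01o s0 -> in01o t0 -> 0 < d ->
  switch_side e f s0 t0 d \/ switch_side f e t0 s0 d ->
  fst (e s0) - ce = fst (f t0) - cf + D ->
  forall eta, 0 < eta ->
  (exists X, Rabs (X - (fst (f t0) - cf)) < eta /\ lof < X < hif /\ loe < X + D < hie /\
     height e ce (X + D) < height f cf X) /\
  (exists X, Rabs (X - (fst (f t0) - cf)) < eta /\ lof < X < hif /\ loe < X + D < hie /\
     height f cf X < height e ce (X + D)).
Proof.
  intros Hs0 Ht0 Hd Hsw Hpos eta Heta.
  set (X0 := fst (f t0) - cf). assert (HX0 : X0 = fst (f t0) - cf) by reflexivity.
  pose proof (lift_range_open e ce loe hie He s0 Hs0).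
  pose proof (lift_range_open f cf lof hif Hf t0 Ht0).
  destruct (exists_pos_below eta d Heta Hd) as [d1 [Hd1 [? ?]]].
  destruct (exists_pos_below (X0 - lof) (hif - X0) ltac:(lra) ltac:(lra)) as [d2 [Hd2 [? ?]]].
  destruct (exists_pos_below (X0 + D - loe) (hie - (X0 + D)) ltac:(lra) ltac:(lra))
    as [d3 [Hd3 [? ?]]].
  destruct (exists_pos_below d1 d2 Hd1 Hd2) as [d4 [Hd4 [? ?]]].
  destruct (exists_pos_below d4 d3 Hd4 Hd3) as [del [Hdel [? ?]]].
  destruct (param_at_interior e ce loe hie He (X0 + del + D) ltac:(lra)) as [Ip1 Ep1].
  destruct (param_at_interior f cf lof hif Hf (X0 + del) ltac:(lra)) as [Ip2 Ep2].
  destruct (param_at_interior e ce loe hie He (X0 - del + D) ltac:(lra)) as [Im1 Em1].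
  destruct (param_at_interior f cf lof hif Hf (X0 - del) ltac:(lra)) as [Im2 Em2].
  assert (Rp : Rabs (X0 + del - X0) < eta) by (rewrite Rabs_right; lra).
  assert (Rm : Rabs (X0 - del - X0) < eta) by (rewrite Rabs_left; lra).
  unfold height.
  destruct Hsw as [Sw|Sw].
  - destruct (Sw _ _ Ip1 Ip2 ltac:(rewrite Rabs_right; lra) ltac:(lra)) as [_ Sp].
    destruct (Sw _ _ Im1 Im2 ltac:(rewrite Rabs_left; lra) ltac:(lra)) as [Sm _].
    split; [exists (X0 - del) | exists (X0 + del)]; repeat split; lra.
  - destruct (Sw _ _ Ip2 Ip1 ltac:(rewrite Rabs_right; lra) ltac:(lra)) as [_ Sp].
    destruct (Sw _ _ Im2 Im1 ltac:(rewrite Rabs_left; lra) ltac:(lra)) as [Sm _].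
    split; [exists (X0 + del) | exists (X0 - del)]; repeat split; lra.
Qed.
End TwoGraphs.

Lemma height_meet_point (e : curve) (loe hie : R) (f : curve) (lof hif : R)
  (ze zf dz : Z) X :
  lifted_graph e (IZR ze) loe hie -> lifted_graph f (IZR zf) lof hif ->
  lof < X < hif -> loe < X + IZR dz < hie ->
  height e (IZR ze) (X + IZR dz) = height f (IZR zf) X ->
  exists u w, in01o u /\ in01o w /\ fst (e u) - IZR ze = X + IZR dz /\
    fst (f w) - IZR zf = X /\ proj (e u) = proj (f w).
Proof.
  intros He Hf H1 H2 Hh.
  destruct (param_at_interior _ _ _ _ He (X + IZR dz) H2) as [U S1].
  destruct (param_at_interior _ _ _ _ Hf X H1) as [W S2].
  exists (param_at e (IZR ze) (X + IZR dz)), (param_at f (IZR zf) X).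
  split; [exact U|]. split; [exact W|]. split; [exact S1|]. split; [exact S2|].
  unfold height in Hh. rewrite (proj_shift _ ze), (proj_shift _ zf), S1, S2, Hh.
  now rewrite frac_part_plus_IZR.
Qed.

(** * Edges of a flag *)

Section Flag.
Variables (n : nat) (v : nat -> pt) (E : nat -> nat -> curve).
Hypothesis Fl : is_flag n v E.

Lemma flag_edge_ends a b : is_edge n a b -> proj (E a b 0) = v a /\ proj (E a b 1) = v b.
Proof.
  intros Hab. destruct Fl as [_ [_ [F3 _]]]. destruct (F3 a b Hab) as [_ [_ [_ [P0 P1]]]]. auto.
Qed.

Lemma flag_edge_graph a b : is_edge n a b ->
  exists z, lifted_graph (E a b) (IZR z) (fst (v b)) (1 + fst (v a)) /\
    snd (E a b 0) = snd (v a) /\ snd (E a b 1) = snd (v b).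
Proof.
  intros Hab. destruct Fl as [F1 [F2 [F3 [F4 [_ [_ [_ F8]]]]]]].
  destruct (F3 a b Hab) as [Xc [Yc [_ [P0 P1]]]].
  pose proof Hab as [Ha [Hlt Hb]].
  pose proof (F1 a ltac:(lia)). pose proof (F1 b ltac:(lia)). pose proof (F2 a b Hab).
  rewrite (surjective_pairing (v a)) in P0. rewrite (surjective_pairing (v b)) in P1.
  destruct (monotone_arc_lift (E a b) (fst (v a)) (fst (v b)) (snd (v a)) (snd (v b)))
    as [z [Z0 [Z1 Zd]]]; try lra; auto.
  exists z. injection P0 as _ Y0. injection P1 as _ Y1. repeat split; auto.
Qed.

Lemma flag_vertex_not_on_relint a b m u : is_edge n a b -> (1 <= m <= n)%nat -> in01o u ->
  proj (E a b u) <> v m.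
Proof.
  intros Hab Hm Hu P. destruct Fl as [_ [_ [_ [_ [F5 _]]]]].
  apply (F5 a b m Hab Hm). exists u. auto.
Qed.

Lemma flag_on_edge_cases a b p : is_edge n a b -> on_curve p (E a b) ->
  p = v a \/ p = v b \/ exists u, in01o u /\ proj (E a b u) = p.
Proof.
  intros Hab [u [Hu Pu]]. destruct (flag_edge_ends a b Hab) as [P0 P1]. unfold in01 in Hu.
  destruct (Req_dec u 0) as [->|]; [left; congruence|].
  destruct (Req_dec u 1) as [->|]; [right; left; congruence|].
  right; right. exists u. split; [unfold in01o; lra | exact Pu].
Qed.

Lemma flag_vertex_not_on_graph a b m z lo hi X : is_edge n a b -> (1 <= m <= n)%nat ->
  lifted_graph (E a b) (IZR z) lo hi -> lo < X < hi -> frac_part X = fst (v m) ->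
  height (E a b) (IZR z) X <> snd (v m).
Proof.
  intros Hab Hm Hg HX Fx Hy.
  destruct (param_at_interior _ _ _ _ Hg X HX) as [U S].
  apply (flag_vertex_not_on_relint a b m _ Hab Hm U).
  rewrite (proj_shift _ z), S, Fx. unfold height in Hy. rewrite Hy.
  symmetry. apply surjective_pairing.
Qed.

Lemma flag_common_point_unique a b c d p q :
  is_edge n a b -> is_edge n c d -> (a, b) <> (c, d) ->
  on_curve p (E a b) -> on_curve p (E c d) -> on_curve q (E a b) -> on_curve q (E c d) -> p = q.
Proof. destruct Fl as [_ [_ [_ [_ [_ [F6 _]]]]]]. eauto. Qed.

Lemma flag_meets_on_one_line a b c d za zc loe hie lof hif (d1 d2 : Z) X1 X2 :
  is_edge n a b -> is_edge n c d -> (a, b) <> (c, d) ->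
  lifted_graph (E a b) (IZR za) loe hie -> lifted_graph (E c d) (IZR zc) lof hif ->
  lof < X1 < hif -> loe < X1 + IZR d1 < hie ->
  height (E a b) (IZR za) (X1 + IZR d1) = height (E c d) (IZR zc) X1 ->
  lof < X2 < hif -> loe < X2 + IZR d2 < hie ->
  height (E a b) (IZR za) (X2 + IZR d2) = height (E c d) (IZR zc) X2 ->
  frac_part X1 = frac_part X2.
Proof.
  intros Hab Hcd Hne Ha Hc A1 A2 A3 B1 B2 B3.
  destruct (height_meet_point _ _ _ _ _ _ _ _ _ _ Ha Hc A1 A2 A3)
    as [u1 [w1 [U1 [W1 [_ [F1 P1]]]]]].
  destruct (height_meet_point _ _ _ _ _ _ _ _ _ _ Ha Hc B1 B2 B3)
    as [u2 [w2 [U2 [W2 [_ [F2 P2]]]]]].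
  rewrite <- F1, <- F2, !frac_part_minus_IZR.
  change (fst (proj (E c d w1)) = fst (proj (E c d w2))). f_equal.
  apply (flag_common_point_unique a b c d); auto;
    [exists u1 | exists w1 | exists u2 | exists w2]; split; auto using in01o_in01.
Qed.

Lemma flag_no_meet_off_shared_vertex a b c d m za zc loe hie lof hif (dz : Z) X :
  is_edge n a b -> is_edge n c d -> (a, b) <> (c, d) -> (1 <= m <= n)%nat ->
  on_curve (v m) (E a b) -> on_curve (v m) (E c d) ->
  lifted_graph (E a b) (IZR za) loe hie -> lifted_graph (E c d) (IZR zc) lof hif ->
  lof < X < hif -> loe < X + IZR dz < hie ->
  height (E a b) (IZR za) (X + IZR dz) <> height (E c d) (IZR zc) X.
Proof.
  intros Hab Hcd Hne Hm Va Vc Ha Hc R1 R2 Hh.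
  destruct (height_meet_point _ _ _ _ _ _ _ _ _ _ Ha Hc R1 R2 Hh)
    as [u [w [U [W [_ [_ P]]]]]].
  apply (flag_vertex_not_on_relint a b m u Hab Hm U).
  apply (flag_common_point_unique a b c d); auto.
  - exists u. split; auto using in01o_in01.
  - exists w. split; auto using in01o_in01.
Qed.

(* A meeting point of two edges is no vertex, hence a proper crossing. *)
Lemma flag_meet_sides a b c d za zc loe hie lof hif (dz : Z) X :
  is_edge n a b -> is_edge n c d -> (a, b) <> (c, d) ->
  lifted_graph (E a b) (IZR za) loe hie -> lifted_graph (E c d) (IZR zc) lof hif ->
  lof < X < hif -> loe < X + IZR dz < hie ->
  height (E a b) (IZR za) (X + IZR dz) = height (E c d) (IZR zc) X ->
  forall eta, 0 < eta ->
  exists X', Rabs (X' - X) < eta /\ lof < X' < hif /\ loe < X' + IZR dz < hie /\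
    height (E c d) (IZR zc) X' < height (E a b) (IZR za) (X' + IZR dz).
Proof.
  intros Hab Hcd Hne Ha Hc A1 A2 A3 eta Heta.
  destruct (height_meet_point _ _ _ _ _ _ _ _ _ _ Ha Hc A1 A2 A3)
    as [u [w [U [W [Su [Sw Pe]]]]]].
  pose proof Fl as [_ [_ [F3 [_ [_ [_ [F7 _]]]]]]].
  destruct (F7 a b c d Hab Hcd Hne (proj (E a b u)) ltac:(exists u; auto using in01o_in01)
              ltac:(exists w; auto using in01o_in01)) as [[_ Vc] | [s0 [t0 [Cr Ps]]]].
  - exfalso. destruct Hcd as [? [? ?]].
    destruct Vc as [Vc|Vc]; rewrite Pe in Vc;
      [apply (flag_vertex_not_on_relint c d c w) | apply (flag_vertex_not_on_relint c d d w)];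
      auto; unfold is_edge; lia.
  - destruct Cr as [Os0 [Ot0 [Pst [dd [Hdd Sw']]]]].
    destruct (F3 a b Hab) as [_ [_ [Inj1 _]]]. destruct (F3 c d Hcd) as [_ [_ [Inj2 _]]].
    assert (s0 = u) as -> by (apply Inj1; auto using in01o_in01).
    assert (t0 = w) as -> by (apply Inj2; auto using in01o_in01; congruence).
    destruct (crossing_sides (E a b) (IZR za) loe hie (E c d) (IZR zc) lof hif Ha Hc
                (IZR dz) u w dd U W Hdd Sw' ltac:(lra) eta Heta) as [_ Side].
    rewrite Sw in Side. exact Side.
Qed.

Lemma flag_below_of_not_above a b c d za zc loe hie lof hif (dz : Z) (l r : R) :
  is_edge n a b -> is_edge n c d -> (a, b) <> (c, d) ->
  lifted_graph (E a b) (IZR za) loe hie -> lifted_graph (E c d) (IZR zc) lof hif ->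
  (forall X, l < X < r -> lof < X < hif /\ loe < X + IZR dz < hie) ->
  (forall X, l < X < r ->
     ~ height (E c d) (IZR zc) X < height (E a b) (IZR za) (X + IZR dz)) ->
  forall X, l < X < r -> height (E a b) (IZR za) (X + IZR dz) < height (E c d) (IZR zc) X.
Proof.
  intros Hab Hcd Hne Ha Hc Hdom Hna X HX.
  pose proof (Hna X HX). destruct (Hdom X HX).
  destruct (Req_dec (height (E a b) (IZR za) (X + IZR dz)) (height (E c d) (IZR zc) X))
    as [Eq|]; [|lra].
  destruct (exists_pos_below (X - l) (r - X) ltac:(lra) ltac:(lra)) as [eta [Heta [? ?]]].
  destruct (flag_meet_sides a b c d za zc loe hie lof hif dz X Hab Hcd Hne Ha Hc
              ltac:(lra) ltac:(lra) Eq eta Heta) as [X' [HX' [_ [_ Above]]]].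
  apply Rabs_def2 in HX'. exfalso. apply (Hna X'); [lra | exact Above].
Qed.
End Flag.

(** * Good upper triplets *)

Section UpperCase.
Variables (n : nat) (v : nat -> pt) (E : nat -> nat -> curve) (i j k s t : nat).
Variables (zst zjk zij zks : Z).
Hypothesis Fl : is_flag n v E.
Hypothesis Hi : (1 <= i)%nat.
Hypothesis Hij : (i < j)%nat.
Hypothesis Hjk : (j < k)%nat.
Hypothesis Hks : (k < s)%nat.
Hypothesis Hst : (s < t)%nat.
Hypothesis Htn : (t <= n)%nat.
Local Notation x m := (fst (v m)).
Local Notation y m := (snd (v m)).
Hypothesis Gst : lifted_graph (E s t) (IZR zst) (x t) (1 + x s).
Hypothesis Gjk : lifted_graph (E j k) (IZR zjk) (x k) (1 + x j).
Hypothesis Gij : lifted_graph (E i j) (IZR zij) (x j) (1 + x i).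
Hypothesis Gks : lifted_graph (E k s) (IZR zks) (x s) (1 + x k).
Hypothesis Yst : snd (E s t 0) = y s /\ snd (E s t 1) = y t.
Hypothesis Yjk : snd (E j k 0) = y j /\ snd (E j k 1) = y k.
Hypothesis Yij : snd (E i j 0) = y i /\ snd (E i j 1) = y j.
Hypothesis Yks : snd (E k s 0) = y k /\ snd (E k s 1) = y s.
Local Notation hst := (height (E s t) (IZR zst)).
Local Notation hjk := (height (E j k) (IZR zjk)).
Local Notation hij := (height (E i j) (IZR zij)).
Local Notation hks := (height (E k s) (IZR zks)).
Hypothesis jk_below_ij : forall X, x k < X < 1 + x i -> hjk X <= hij X.
Hypothesis s_below_jk : y s < hjk (x s).
Hypothesis t_below_jk : y t < hjk (x t).

Lemma x_order : 0 < x i /\ x i < x j /\ x j < x k /\ x k < x s /\ x s < x t /\ x t < 1.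
Proof.
  destruct Fl as [F1 [F2 _]].
  pose proof (F1 i ltac:(lia)). pose proof (F1 t ltac:(lia)).
  pose proof (F2 i j ltac:(unfold is_edge; lia)). pose proof (F2 j k ltac:(unfold is_edge; lia)).
  pose proof (F2 k s ltac:(unfold is_edge; lia)). pose proof (F2 s t ltac:(unfold is_edge; lia)).
  lra.
Qed.

Lemma edge_st : is_edge n s t. Proof. unfold is_edge; lia. Qed.

Lemma edge_jk : is_edge n j k. Proof. unfold is_edge; lia. Qed.

Lemma edge_ij : is_edge n i j. Proof. unfold is_edge; lia. Qed.

Lemma edge_ks : is_edge n k s. Proof. unfold is_edge; lia. Qed.

Lemma ks_below_jk X : x s < X < 1 + x j -> hks X < hjk X.
Proof.
  intros HX. pose proof x_order.
  assert (Apart : forall X, x s < X < 1 + x j -> hks (X + 0) <> hjk X).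
  { intros X' HX'.
    apply (flag_no_meet_off_shared_vertex n v E Fl k s j k k zks zjk (x s) (1 + x k)
             (x k) (1 + x j) 0 X' edge_ks edge_jk ltac:(intros [=]; lia) ltac:(lia));
      [exists 0 | exists 1 | | | |]; unfold in01; auto; try lra.
    - split; [lra | apply (flag_edge_ends n v E Fl k s edge_ks)].
    - split; [lra | apply (flag_edge_ends n v E Fl j k edge_jk)]. }
  destruct (height_gap_near_end (E k s) (IZR zks) (x s) (1 + x k) (E j k) (IZR zjk) (x k)
              (1 + x j) Gks Gjk 0 1 ltac:(lra) ltac:(rewrite (proj2 Yks), Rminus_0_r; lra)
              (X - x s) ltac:(lra)) as [X0 [? [? [? Hneg]]]].
  pose proof (height_gap_keeps_sign (E k s) (IZR zks) (x s) (1 + x k) (E j k) (IZR zjk) (x k)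
                (1 + x j) Gks Gjk 0 1 (x s) (1 + x j) X0 ltac:(intros; lra) Apart
                ltac:(lra) Hneg X HX).
  rewrite Rplus_0_r in *. lra.
Qed.

Lemma st_below_ks : hst (1 + x k) < y k -> forall X, x t < X < 1 + x k -> hst X < hks X.
Proof.
  intros Hk X HX. pose proof x_order.
  assert (Apart : forall X, x t < X < 1 + x k -> hks (X + 0) <> hst X).
  { intros X' HX'.
    apply (flag_no_meet_off_shared_vertex n v E Fl k s s t s zks zst (x s) (1 + x k)
             (x t) (1 + x s) 0 X' edge_ks edge_st ltac:(intros [=]; lia) ltac:(lia));
      [exists 1 | exists 0 | | | |]; unfold in01; auto; try lra.
    - split; [lra | apply (flag_edge_ends n v E Fl k s edge_ks)].
    - split; [lra | apply (flag_edge_ends n v E Fl s t edge_st)]. }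
  destruct (height_gap_near_start (E k s) (IZR zks) (x s) (1 + x k) (E s t) (IZR zst) (x t)
              (1 + x s) Gks Gst 0 (-1) ltac:(lra) ltac:(rewrite (proj1 Yks), Rminus_0_r; lra)
              (1 + x k - X) ltac:(lra)) as [X0 [? [? [? Hneg]]]].
  pose proof (height_gap_keeps_sign (E k s) (IZR zks) (x s) (1 + x k) (E s t) (IZR zst) (x t)
                (1 + x s) Gks Gst 0 (-1) (x t) (1 + x k) X0 ltac:(intros; lra) Apart
                ltac:(lra) Hneg X HX).
  rewrite Rplus_0_r in *. lra.
Qed.

(* Otherwise [st], starting below [jk] at [v s] and ending above it past [v k], would meet [jk]
   a second time, over [(x k, x s)]. *)
Lemma st_below_k_of_meet_jk M1 : x t < M1 < 1 + x j -> hst M1 = hjk M1 -> hst (1 + x k) < y k.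
Proof.
  intros HM1 EM1. pose proof x_order.
  destruct (Rlt_or_le (hst (1 + x k)) (y k)) as [|Hge]; [assumption|]. exfalso.
  assert (Hne : hst (1 + x k) <> y k).
  { apply (flag_vertex_not_on_graph n v E Fl s t k zst (x t) (1 + x s) (1 + x k) edge_st
             ltac:(lia) Gst ltac:(lra)).
    rewrite frac_part_small1 by lra. ring. }
  destruct (height_gap_near_end (E j k) (IZR zjk) (x k) (1 + x j) (E s t) (IZR zst) (x t)
              (1 + x s) Gjk Gst (-1) 1 ltac:(lra)
              ltac:(rewrite (proj2 Yjk); replace (x k - -1) with (1 + x k) by ring; lra)
              ((x s - x k) / 2) ltac:(lra)) as [Xa [? [? [? Ha]]]].
  destruct (height_gap_near_start (E s t) (IZR zst) (x t) (1 + x s) (E j k) (IZR zjk) (x k)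
              (1 + x j) Gst Gjk 1 1 ltac:(lra)
              ltac:(rewrite (proj1 Yst); replace (1 + x s - 1) with (x s) by ring; lra)
              ((x s - x k) / 2) ltac:(lra)) as [Xb [? [? [? Hb]]]].
  destruct (height_gap_root (E s t) (IZR zst) (x t) (1 + x s) (E j k) (IZR zjk) (x k)
              (1 + x j) Gst Gjk 1 (-1) (Xa - 1) Xb ltac:(lra) ltac:(intros; lra)
              ltac:(replace (Xa - 1 + 1) with Xa by ring; replace (Xa + -1) with (Xa - 1) in Ha
                      by ring; lra) ltac:(lra)) as [M2 [HM2 EM2]].
  pose proof (flag_meets_on_one_line n v E Fl s t j k zst zjk (x t) (1 + x s) (x k) (1 + x j)
                0 1 M1 M2 edge_st edge_jk ltac:(intros [=]; lia) Gst Gjk ltac:(lra)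
                ltac:(simpl; lra) ltac:(rewrite Rplus_0_r; exact EM1) ltac:(lra)
                ltac:(simpl; lra) ltac:(simpl; exact EM2)) as Hline.
  rewrite (frac_part_small M2) in Hline by lra.
  destruct (Rlt_or_le M1 1).
  - rewrite frac_part_small in Hline by lra. lra.
  - rewrite frac_part_small1 in Hline by lra. lra.
Qed.

Lemma st_below_jk : forall X, x t < X < 1 + x j -> hst X < hjk X.
Proof.
  pose proof x_order.
  assert (Hb : forall X, x t < X < 1 + x j -> hst (X + IZR 0) < hjk X).
  { apply (flag_below_of_not_above n v E Fl s t j k zst zjk (x t) (1 + x s) (x k) (1 + x j)
             0 (x t) (1 + x j) edge_st edge_jk ltac:(intros [=]; lia) Gst Gjk).
    - intros. simpl. lra.
    - intros X1 HX1 Above. rewrite Rplus_0_r in Above.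
      destruct (height_gap_near_end (E s t) (IZR zst) (x t) (1 + x s) (E j k) (IZR zjk) (x k)
                  (1 + x j) Gst Gjk 0 1 ltac:(lra)
                  ltac:(rewrite (proj2 Yst), Rminus_0_r; lra) (X1 - x t) ltac:(lra))
        as [X0 [? [? [? Hneg]]]].
      destruct (height_gap_root (E s t) (IZR zst) (x t) (1 + x s) (E j k) (IZR zjk) (x k)
                  (1 + x j) Gst Gjk 0 1 X0 X1 ltac:(lra) ltac:(intros; lra) Hneg
                  ltac:(rewrite Rplus_0_r; lra)) as [M1 [HM1 EM1]].
      rewrite Rplus_0_r in EM1.
      pose proof (st_below_k_of_meet_jk M1 ltac:(lra) EM1) as Hk.
      pose proof (st_below_ks Hk X1 ltac:(lra)). pose proof (ks_below_jk X1 ltac:(lra)).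
      lra. }
  intros X HX. specialize (Hb X HX). rewrite Rplus_0_r in Hb. exact Hb.
Qed.

Lemma st_below_ij X : x t < X < 1 + x i -> hst X < hij X.
Proof.
  intros HX. pose proof x_order.
  pose proof (st_below_jk X ltac:(lra)). pose proof (jk_below_ij X ltac:(lra)). lra.
Qed.

Lemma st_below_j : hst (1 + x j) < y j.
Proof.
  pose proof x_order.
  destruct (Rlt_or_le (hst (1 + x j)) (y j)) as [|Hge]; [assumption|]. exfalso.
  assert (Hne : hst (1 + x j) <> y j).
  { apply (flag_vertex_not_on_graph n v E Fl s t j zst (x t) (1 + x s) (1 + x j) edge_st
             ltac:(lia) Gst ltac:(lra)).
    rewrite frac_part_small1 by lra. ring. }
  destruct (height_gap_near_start (E j k) (IZR zjk) (x k) (1 + x j) (E s t) (IZR zst) (x t)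
              (1 + x s) Gjk Gst 0 1 ltac:(lra)
              ltac:(rewrite (proj1 Yjk), Rminus_0_r; lra) (1 + x j - x t) ltac:(lra))
    as [X0 [? [? [? Hneg]]]].
  rewrite Rplus_0_r in Hneg. pose proof (st_below_jk X0 ltac:(lra)). lra.
Qed.

(* Above [(x j, x s)] the edge [st] is seen one turn further in its lift. *)
Lemma st_below_ij_shifted : forall X, x j < X < x s -> hst (X + 1) < hij X.
Proof.
  pose proof x_order. pose proof st_below_j.
  pose proof (jk_below_ij (x s) ltac:(lra)).
  apply (flag_below_of_not_above n v E Fl s t i j zst zij (x t) (1 + x s) (x j) (1 + x i)
           1 (x j) (x s) edge_st edge_ij ltac:(intros [=]; lia) Gst Gij).
  { intros. simpl. lra. }
  intros X1 HX1 Above. simpl in Above.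
  destruct (height_gap_near_end (E i j) (IZR zij) (x j) (1 + x i) (E s t) (IZR zst) (x t)
              (1 + x s) Gij Gst (-1) (-1) ltac:(lra)
              ltac:(rewrite (proj2 Yij); replace (x j - -1) with (1 + x j) by ring; lra)
              (X1 - x j) ltac:(lra)) as [Xa [? [? [? Ha]]]].
  destruct (height_gap_near_start (E s t) (IZR zst) (x t) (1 + x s) (E i j) (IZR zij) (x j)
              (1 + x i) Gst Gij 1 1 ltac:(lra)
              ltac:(rewrite (proj1 Yst); replace (1 + x s - 1) with (x s) by ring; lra)
              (x s - X1) ltac:(lra)) as [Xb [? [? [? Hb]]]].
  destruct (height_gap_root (E s t) (IZR zst) (x t) (1 + x s) (E i j) (IZR zij) (x j)
              (1 + x i) Gst Gij 1 1 (Xa - 1) X1 ltac:(lra) ltac:(intros; lra)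
              ltac:(replace (Xa - 1 + 1) with Xa by ring; replace (Xa + -1) with (Xa - 1) in Ha
                      by ring; lra) ltac:(lra)) as [Ma [HMa EMa]].
  destruct (height_gap_root (E s t) (IZR zst) (x t) (1 + x s) (E i j) (IZR zij) (x j)
              (1 + x i) Gst Gij 1 (-1) X1 Xb ltac:(lra) ltac:(intros; lra)
              ltac:(lra) ltac:(lra)) as [Mb [HMb EMb]].
  pose proof (flag_meets_on_one_line n v E Fl s t i j zst zij (x t) (1 + x s) (x j) (1 + x i)
                1 1 Ma Mb edge_st edge_ij ltac:(intros [=]; lia) Gst Gij ltac:(lra)
                ltac:(simpl; lra) ltac:(simpl; exact EMa) ltac:(lra)
                ltac:(simpl; lra) ltac:(simpl; exact EMb)) as Hline.
  rewrite (frac_part_small Ma), (frac_part_small Mb) in Hline by lra. lra.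
Qed.

Lemma st_below_ij_on_common_lines u w : in01o u -> in01o w ->
  frac_part (fst (E s t u)) = frac_part (fst (E i j w)) -> snd (E s t u) < snd (E i j w).
Proof.
  intros Hu Hw F. pose proof x_order.
  pose proof (lift_range_open _ _ _ _ Gst u Hu). pose proof (lift_range_open _ _ _ _ Gij w Hw).
  rewrite <- (frac_part_minus_IZR (fst (E s t u)) zst),
    <- (frac_part_minus_IZR (fst (E i j w)) zij) in F.
  destruct (frac_part_eq_IZR _ _ F) as [z Z].
  assert (Zb : (-1 < z < 2)%Z) by (split; apply lt_IZR; lra).
  rewrite <- (height_lift _ _ _ _ Gst u), <- (height_lift _ _ _ _ Gij w) by now apply in01o_in01.
  destruct (Z.eq_dec z 0) as [->|Z0].
  - rewrite Z, Rplus_0_r. apply st_below_ij. rewrite Rplus_0_r in Z. lra.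
  - assert (z = 1%Z) as -> by lia. rewrite Z. apply st_below_ij_shifted. lra.
Qed.

Lemma st_ij_disjoint : disjoint_curves (E s t) (E i j).
Proof.
  intros p Hst_p Hij_p. pose proof x_order.
  assert (Hx : forall a b, v a = v b -> x a = x b) by (intros a b ->; reflexivity).
  destruct (flag_on_edge_cases n v E Fl s t p edge_st Hst_p) as [Ps|[Ps|[u [U Pu]]]];
    destruct (flag_on_edge_cases n v E Fl i j p edge_ij Hij_p) as [Pi|[Pi|[w [W Pw]]]];
    try (assert (x s = x i \/ x s = x j \/ x t = x i \/ x t = x j) by
           (rewrite <- Ps, <- Pi; auto); lra).
  - apply (flag_vertex_not_on_relint n v E Fl i j s w edge_ij ltac:(lia) W). congruence.
  - apply (flag_vertex_not_on_relint n v E Fl i j t w edge_ij ltac:(lia) W). congruence.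
  - apply (flag_vertex_not_on_relint n v E Fl s t i u edge_st ltac:(lia) U). congruence.
  - apply (flag_vertex_not_on_relint n v E Fl s t j u edge_st ltac:(lia) U). congruence.
  - rewrite <- Pw in Pu. unfold proj in Pu. injection Pu as F Y.
    pose proof (st_below_ij_on_common_lines u w U W F). lra.
Qed.

Lemma st_ij_related : related_curves (E s t) (E i j).
Proof.
  pose proof x_order. split; [|split].
  - intros [s0 [t0 [Hs0 [Ht0 [Pe _]]]]]. apply st_ij_disjoint with (proj (E s t s0)).
    + exists s0. split; auto using in01o_in01.
    + exists t0. split; auto using in01o_in01.
  - set (X := (x t + 1 + x i) / 2).
    assert (HX : x t < X < 1 + x i) by (unfold X; lra).
    exists (param_at (E s t) (IZR zst) X), (param_at (E i j) (IZR zij) X).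
    split; [apply (param_at_open _ _ _ _ Gst); lra|].
    split; [apply (param_at_open _ _ _ _ Gij); lra|].
    apply (param_at_same_line _ _ (x t) (1 + x s) _ _ (x j) (1 + x i)); auto; lra.
  - left. intros u w Hu Hw F. pose proof (st_below_ij_on_common_lines u w Hu Hw F). lra.
Qed.

Lemma st_ij_separated : disjoint_curves (E s t) (E i j) /\ related_curves (E s t) (E i j).
Proof. exact (conj st_ij_disjoint st_ij_related). Qed.
End UpperCase.

Lemma flag_upper_edges_separated n v E i j k s t : is_flag n v E ->
  (1 <= i)%nat -> (i < j)%nat -> (j < k)%nat -> (k < s)%nat -> (s < t)%nat -> (t <= n)%nat ->
  below_all (E j k) (E i j) -> pt_below (v s) (E j k) -> pt_below (v t) (E j k) ->
  disjoint_curves (E s t) (E i j) /\ related_curves (E s t) (E i j).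
Proof.
  intros Fl Hi Hij Hjk Hks Hst Htn Bjk [ws [Hws [Fs Ls]]] [wt [Hwt [Ft Lt]]].
  destruct (flag_edge_graph n v E Fl s t ltac:(unfold is_edge; lia)) as [zst [Gst Yst]].
  destruct (flag_edge_graph n v E Fl j k ltac:(unfold is_edge; lia)) as [zjk [Gjk Yjk]].
  destruct (flag_edge_graph n v E Fl i j ltac:(unfold is_edge; lia)) as [zij [Gij Yij]].
  destruct (flag_edge_graph n v E Fl k s ltac:(unfold is_edge; lia)) as [zks [Gks Yks]].
  destruct (x_order n v E i j k s t Fl Hi Hij Hjk Hks Hst Htn) as (? & ? & ? & ? & ? & ?).
  rewrite <- (frac_part_small (fst (v s))) in Fs by lra.
  rewrite <- (frac_part_small (fst (v t))) in Ft by lra.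
  rewrite <- (height_at_line _ _ _ _ (fst (v s)) ws Gjk ltac:(lra) ltac:(lra) Hws Fs) in Ls.
  rewrite <- (height_at_line _ _ _ _ (fst (v t)) wt Gjk ltac:(lra) ltac:(lra) Hwt Ft) in Lt.
  exact (st_ij_separated n v E i j k s t zst zjk zij zks Fl Hi Hij Hjk Hks Hst Htn
           Gst Gjk Gij Gks Yst Yjk Yij Yks
           (fun X HX => below_all_height _ _ _ _ _ _ _ _ X Gjk Gij Bjk ltac:(lra) ltac:(lra))
           Ls Lt).
Qed.

(** * Mirror symmetry *)

Definition mirror (p : pt) : pt := (fst p, - snd p).
Definition mirror_curve (e : curve) : curve := fun s => mirror (e s).

Lemma mirror_involutive (p : pt) : mirror (mirror p) = p.
Proof. destruct p as [a b]. unfold mirror. simpl. now rewrite Ropp_involutive. Qed.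

Lemma mirror_inj (p q : pt) : mirror p = mirror q -> p = q.
Proof. intros H. rewrite <- (mirror_involutive p), <- (mirror_involutive q), H. reflexivity. Qed.

Lemma mirror_curve_involutive (e : curve) : mirror_curve (mirror_curve e) = e.
Proof. apply functional_extensionality. intros s. apply mirror_involutive. Qed.

Lemma proj_mirror (p : pt) : proj (mirror p) = mirror (proj p).
Proof. reflexivity. Qed.

Lemma on_curve_mirror (p : pt) (e : curve) :
  on_curve p (mirror_curve e) -> on_curve (mirror p) e.
Proof.
  intros [s [Hs P]]. exists s. split; [exact Hs|].
  apply mirror_inj. rewrite mirror_involutive, <- P. reflexivity.
Qed.

Lemma switch_side_mirror (e f : curve) (s0 t0 d : R) : switch_side e f s0 t0 d ->
  switch_side (mirror_curve f) (mirror_curve e) t0 s0 d.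
Proof.
  unfold switch_side, mirror_curve, mirror. simpl. intros Sw t s Ht Hs Hd Hx.
  destruct (Sw s t Hs Ht ltac:(rewrite <- Hx; exact Hd) ltac:(lra)). lra.
Qed.

Lemma crosses_at_mirror (e f : curve) (s t : R) :
  crosses_at e f s t -> crosses_at (mirror_curve e) (mirror_curve f) s t.
Proof.
  intros [Hs [Ht [P [d [Hd Sw]]]]]. split; [exact Hs|]. split; [exact Ht|]. split.
  - unfold mirror_curve. rewrite proj_mirror, P. reflexivity.
  - exists d. split; [exact Hd|].
    destruct Sw; [right | left]; now apply switch_side_mirror.
Qed.

Lemma below_all_mirror (e f : curve) :
  below_all e f -> below_all (mirror_curve f) (mirror_curve e).
Proof.
  unfold below_all, mirror_curve, mirror. simpl. intros B t s Ht Hs F.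
  pose proof (B s t Hs Ht (eq_sym F)). lra.
Qed.

Lemma pt_below_mirror (p : pt) (e : curve) :
  pt_above p e -> pt_below (mirror p) (mirror_curve e).
Proof.
  intros [s [Hs [F L]]]. exists s. unfold mirror_curve, mirror. simpl.
  split; [exact Hs|]. split; [exact F | lra].
Qed.

Lemma disjoint_mirror (e f : curve) :
  disjoint_curves e f -> disjoint_curves (mirror_curve e) (mirror_curve f).
Proof.
  intros D p Pe Pf. exact (D (mirror p) (on_curve_mirror p e Pe) (on_curve_mirror p f Pf)).
Qed.

Lemma related_mirror (e f : curve) :
  related_curves e f -> related_curves (mirror_curve e) (mirror_curve f).
Proof.
  intros [NC [L B]]. split; [|split; [exact L|]].
  - intros [s [t C]]. apply NC. exists s, t.
    rewrite <- (mirror_curve_involutive e), <- (mirror_curve_involutive f).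
    now apply crosses_at_mirror.
  - destruct B; [right | left]; now apply below_all_mirror.
Qed.

Lemma is_flag_mirror n v E : is_flag n v E ->
  is_flag n (fun m => mirror (v m)) (fun a b => mirror_curve (E a b)).
Proof.
  intros (F1 & F2 & F3 & F4 & F5 & F6 & F7 & F8).
  split; [exact F1|]. split; [exact F2|]. split; [|split; [exact F4|]].
  { intros a b Hab. destruct (F3 a b Hab) as (Xc & Yc & Inj & P0 & P1).
    split; [exact Xc|]. split; [now apply continuity_opp|]. split; [|split].
    - intros s t Hs Ht P. apply Inj; auto. apply mirror_inj. exact P.
    - unfold mirror_curve. now rewrite proj_mirror, P0.
    - unfold mirror_curve. now rewrite proj_mirror, P1. }
  split; [|split; [|split; [|exact F8]]].
  - intros a b m Hab Hm [u [Hu P]]. apply (F5 a b m Hab Hm). exists u. split; [exact Hu|].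
    apply mirror_inj. exact P.
  - intros a b c d Hab Hcd Hne p q Pab Pcd Qab Qcd. apply mirror_inj.
    apply (F6 a b c d Hab Hcd Hne); now apply on_curve_mirror.
  - intros a b c d Hab Hcd Hne p Pab Pcd.
    destruct (F7 a b c d Hab Hcd Hne (mirror p) (on_curve_mirror p _ Pab)
                (on_curve_mirror p _ Pcd)) as [[Hv1 Hv2] | [s [t [C P]]]].
    + left. split; [destruct Hv1 | destruct Hv2]; [left | right | left | right];
        rewrite <- (mirror_involutive p); congruence.
    + right. exists s, t. split; [now apply crosses_at_mirror|].
      unfold mirror_curve. rewrite proj_mirror, P. apply mirror_involutive.
Qed.

Theorem claim15 (n : nat) (v : nat -> pt) (E : nat -> nat -> curve) (i j k : nat) :
  is_flag n v E -> (1 <= i)%nat -> (i < j)%nat -> (j < k)%nat -> (k <= n)%nat ->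
  (good_upper n v E i j k ->
     forall s t, (s < t)%nat -> Vminus n v E j k s -> Vminus n v E j k t ->
       disjoint_curves (E s t) (E i j) /\ related_curves (E s t) (E i j)) /\
  (good_lower n v E i j k ->
     forall s t, (s < t)%nat -> Vplus n v E j k s -> Vplus n v E j k t ->
       disjoint_curves (E s t) (E i j) /\ related_curves (E s t) (E i j)).
Proof.
  intros Fl Hi Hij Hjk Hkn. split.
  - intros [[_ Bjk] _] s t Hst [[Hks _] Bs] [[_ Htn] Bt].
    exact (flag_upper_edges_separated n v E i j k s t Fl Hi Hij Hjk Hks Hst Htn Bjk Bs Bt).
  - intros [[_ Bij] _] s t Hst [[Hks _] As] [[_ Htn] At].
    destruct (flag_upper_edges_separated n _ _ i j k s t (is_flag_mirror n v E Fl)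
                Hi Hij Hjk Hks Hst Htn (below_all_mirror _ _ Bij)
                (pt_below_mirror _ _ As) (pt_below_mirror _ _ At)) as [D R].
    rewrite <- (mirror_curve_involutive (E s t)), <- (mirror_curve_involutive (E i j)).
    exact (conj (disjoint_mirror _ _ D) (related_mirror _ _ R)).
Qed.
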